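(* Let $m,n,w,d,l$ be positive integers with $w\le m$. Let $n_0=n>n_1>\dots>n_{l-1}$ be a decreasing sequence of positive integers such that for all $1\le i\le l-1$: $n_i$ divides $nw$ and $\frac{nw}{m}\le n_i\le\left(1-\frac{d}{nw}\right)n_{i-1}$. Put $w_i=\frac{nw}{n_i}$. Then $$\sum_{i=0}^{l-1}B(n,n_i,d)\,A(m,n_i,w_i,d)\le B(mn,nw,d).$$
   Context: $J(m,w)$ denotes the set of binary vectors of length $m$ and Hamming weight $w$. Elements of $J(m,w)^n$ are identified with $m\times n$ binary matrices all of whose columns have weight $w$, with binary Hamming distance. $A(m,n,w,d)$ is the maximum cardinality of a nonempty subset of $J(m,w)^n$ with pairwise Hamming distances at least $2d$. $B(N,W,d)$ is the maximum cardinality of a nonempty subset of $J(N,W)$ with pairwise Hamming distances at least $2d$. *)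

From mathcomp Require Import all_boot all_order all_algebra.
Set Implicit Arguments. Unset Strict Implicit. Unset Printing Implicit Defensive.

(* Binary words indexed by a finite type I: {ffun I -> bool}.
   Vectors of length N: I = 'I_N.  m x n binary matrices: I = 'I_m * 'I_n
   (entry (i,j) = row i, column j). *)

Definition hwt (I : finType) (x : {ffun I -> bool}) : nat := #|[set i | x i]|.
Definition hdist (I : finType) (x y : {ffun I -> bool}) : nat :=
  #|[set i | x i != y i]|.

Definition is_code (I : finType) (P : pred {ffun I -> bool}) (d : nat)
  (C : {set {ffun I -> bool}}) : bool :=
  [&& C != set0, [forall x in C, P x] &
      [forall x in C, forall y in C, (x != y) ==> (2 * d <= hdist x y)]].

(* maximum cardinality of such a code (0 if none exists) *)
Definition maxcode (I : finType) (P : pred {ffun I -> bool}) (d : nat) : nat :=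
  \max_(C : {set {ffun I -> bool}} | @is_code I P d C) #|C|.

Definition inJ (N W : nat) : pred {ffun 'I_N -> bool} := fun x => hwt x == W.

Definition inJn (m n w : nat) : pred {ffun ('I_m * 'I_n)%type -> bool} :=
  fun x => [forall j : 'I_n, #|[set i : 'I_m | x (i, j)]| == w].

Definition Bcode (N W d : nat) : nat := @maxcode _ (@inJ N W) d.
Definition Acode (m n w d : nat) : nat := @maxcode _ (@inJn m n w) d.

From mathcomp Require Import all_boot all_order all_algebra.
From mathcomp Require Import zify ring.
Import GRing.Theory Num.Theory.

Set Implicit Arguments. Unset Strict Implicit. Unset Printing Implicit Defensive.

(* A word b of J(n, n_i) selects n_i of the n columns; writing the columns of
   a matrix a of J(m, w_i)^(n_i) into them (zero columns elsewhere) gives an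
   m x n matrix of weight n_i w_i = nw, i.e. a word of J(mn, nw).  Two such
   matrices share at most |b /\ b'| w_i ones.  Inside level i this makes the
   product of optimal codes for B(n, n_i, d) and A(m, n_i, w_i, d) a code
   (|b /\ b'| <= n_i - d when b <> b'); across levels i < j the hypothesis
   n_j <= (1 - d/nw) n_i says exactly n_j w_i <= nw - d.  The union of the l
   levels is therefore a code in J(mn, nw) of the required size. *)

Definition separated (I : finType) (d : nat) (C : {set {ffun I -> bool}}) :=
  {in C &, forall x y, x != y -> 2 * d <= hdist x y}.

Lemma hdistC (I : finType) (x y : {ffun I -> bool}) : hdist x y = hdist y x.
Proof. by apply: eq_card => i; rewrite !inE eq_sym. Qed.

Lemma hdistxx (I : finType) (x : {ffun I -> bool}) : hdist x x = 0.
Proof. by apply: eq_card0 => i; rewrite !inE eqxx. Qed.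

Lemma card_set_indicator (T : finType) (p : pred T) :
  #|[set x | p x]| = \sum_x p x.
Proof. by rewrite -sum1dep_card big_mkcond; apply: eq_bigr => x _; case: (p x). Qed.

Lemma hdist_hwt (I : finType) (x y : {ffun I -> bool}) :
  hdist x y + 2 * #|[set i | x i && y i]| = hwt x + hwt y.
Proof.
rewrite /hdist /hwt !card_set_indicator big_distrr -!big_split /=.
by apply: eq_bigr => i _; case: (x i); case: (y i).
Qed.

Lemma card_set_cols (I J : finType) (p : pred (I * J)) :
  #|[set q | p q]| = \sum_(j : J) #|[set i | p (i, j)]|.
Proof.
rewrite card_set_indicator (eq_bigr (fun j => \sum_i (p (i, j) : nat))); last first.
  by move=> j _; rewrite card_set_indicator.
by rewrite exchange_big pair_big; apply: eq_bigr => -[].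
Qed.

Lemma hwt_inJn m N W (a : {ffun 'I_m * 'I_N -> bool}) : inJn W a -> hwt a = N * W.
Proof.
move=> /forallP colW; rewrite /hwt card_set_cols (eq_bigr (fun=> W)).
  by rewrite sum_nat_const card_ord.
by move=> j _; apply/eqP/colW.
Qed.

Lemma card_meet_le_cols (R K : finType) (X Y : {ffun R * K -> bool})
    (bX bY : pred K) W :
  (forall r c, X (r, c) -> bX c) -> (forall r c, Y (r, c) -> bY c) ->
  (forall c, #|[set r | X (r, c)]| <= W) ->
  #|[set p | X p && Y p]| <= #|[set c | bX c && bY c]| * W.
Proof.
move=> suppX suppY colX; rewrite card_set_cols card_set_indicator big_distrl /=.
apply: leq_sum => c _; case: (boolP (bX c && bY c)) => [_|notXY].
  rewrite mul1n (leq_trans _ (colX c)) // subset_leq_card //.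
  by apply/subsetP => r; rewrite !inE => /andP[].
rewrite mul0n leqn0 cards_eq0; apply/eqP/setP => r; rewrite !inE.
by apply: contraNF notXY => /andP[/suppX -> /suppY ->].
Qed.

Lemma card_imset_separated (T I : finType) (f : T -> {ffun I -> bool})
    (S : {set T}) d :
  0 < d -> {in S &, forall p q, p != q -> 2 * d <= hdist (f p) (f q)} ->
  #|f @: S| = #|S|.
Proof.
move=> d_gt0 f_sep; apply: card_in_imset => p q pS qS fpq; apply/eqP/negPn/negP.
by move=> /(f_sep _ _ pS qS); rewrite fpq hdistxx; lia.
Qed.

Lemma le_maxcode (I : finType) (P : pred {ffun I -> bool}) d
    (C : {set {ffun I -> bool}}) :
  {in C, forall x, P x} -> separated d C -> #|C| <= maxcode P d.
Proof.
move=> C_in C_sep; have [->|C_n0] := eqVneq C set0; first by rewrite cards0.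
apply: leq_bigmax_cond; apply/and3P; split=> //.
  by apply/forallP => x; apply/implyP/C_in.
apply/forallP => x; apply/implyP => xC; apply/forallP => y; apply/implyP => yC.
by apply/implyP/C_sep.
Qed.

Lemma maxcode_witness (I : finType) (P : pred {ffun I -> bool}) d :
  exists C : {set {ffun I -> bool}},
    [/\ #|C| = maxcode P d, {in C, forall x, P x} & separated d C].
Proof.
have [C0 C0_code|no_code] := pickP (is_code P d); last first.
  by exists set0; split=> [|x|x]; rewrite ?inE // cards0 /maxcode big_pred0.
have some_code : 0 < #|is_code P d| by apply/card_gt0P; exists C0.
have [C C_code C_max] :=
  eq_bigmax_cond (fun C : {set {ffun I -> bool}} => #|C|) some_code.
case/and3P: C_code => _ /forallP C_in /forallP C_sep; exists C; split.
- exact: esym C_max.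
- by move=> x; move/implyP: (C_in x).
- move=> x y xC yC; move/implyP: (C_sep x) => /(_ xC) /forallP /(_ y) /implyP.
  by move=> /(_ yC) /implyP.
Qed.

Lemma le_Bcode (I : finType) N W d (C : {set {ffun I -> bool}}) :
  #|I| = N -> {in C, forall x, hwt x = W} -> separated d C ->
  #|C| <= Bcode N W d.
Proof.
move=> card_I C_wt C_sep.
pose phi (k : 'I_N) : I := enum_val (cast_ord (esym card_I) k).
have phi_bij : bijective phi.
  exists (fun i => cast_ord card_I (enum_rank i)) => k; rewrite /phi.
    by rewrite enum_valK cast_ordKV.
  by rewrite cast_ordK enum_rankK.
pose relabel (x : {ffun I -> bool}) : {ffun 'I_N -> bool} := [ffun k => x (phi k)].
have card_relabel (p : pred I) : #|[set k | p (phi k)]| = #|[set i | p i]|.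
  rewrite -[RHS](on_card_preimset (onW_bij _ phi_bij)).
  by apply: eq_card => k; rewrite !inE.
have hwt_relabel x : hwt (relabel x) = hwt x.
  by rewrite /hwt -card_relabel; apply: eq_card => k; rewrite !inE ffunE.
have hdist_relabel x y : hdist (relabel x) (relabel y) = hdist x y.
  by rewrite /hdist -card_relabel; apply: eq_card => k; rewrite !inE !ffunE.
have relabel_inj : injective relabel.
  move=> x y /ffunP xy; apply/ffunP => i; have [psi _ phiK] := phi_bij.
  by move: (xy (psi i)); rewrite !ffunE phiK.
rewrite -(card_imset _ relabel_inj); apply: le_maxcode.
  by move=> _ /imsetP[x xC ->]; rewrite /inJ hwt_relabel C_wt.
move=> _ _ /imsetP[x xC ->] /imsetP[y yC ->] xy.
by rewrite hdist_relabel; apply: C_sep => //; apply: contraNneq xy => ->.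
Qed.

Section Spread.
Variables (R J K : finType) (g : J -> K).
Hypothesis g_inj : injective g.

Definition spread (a : {ffun R * J -> bool}) : {ffun R * K -> bool} :=
  [ffun p => [exists k, (g k == p.2) && a (p.1, k)]].

Lemma spread_image a r k : spread a (r, g k) = a (r, k).
Proof.
rewrite ffunE; apply/existsP/idP => [[k' /andP[/eqP/g_inj -> //]]|akr].
by exists k; rewrite eqxx.
Qed.

Lemma spread_codom a r c : spread a (r, c) -> c \in codom g.
Proof. by rewrite ffunE => /existsP[k /andP[/eqP /= <- _]]; apply: codom_f. Qed.

Lemma spread_set (f : bool -> bool -> bool) a a' : f false false = false ->
  [set p | f (spread a p) (spread a' p)] =
  (fun q => (q.1, g q.2)) @: [set q | f (a q) (a' q)].
Proof.
move=> f00; have lift_inj : injective (fun q : R * J => (q.1, g q.2)).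
  by move=> [r k] [r' k'] [-> /g_inj ->].
apply/setP => -[r c]; rewrite inE.
have [/codomP[k ->]|c_out] := boolP (c \in codom g).
  rewrite !spread_image -[(r, g k)]/((fun q : R * J => (q.1, g q.2)) (r, k)).
  by rewrite mem_imset // inE.
have outside x : spread x (r, c) = false.
  by apply: contraNF c_out; apply: spread_codom.
rewrite !outside f00; apply/esym/negbTE/imsetP.
move=> [[r' k] _ /(congr1 snd) /= gk].
by rewrite gk codom_f in c_out.
Qed.

Lemma hwt_spread a : hwt (spread a) = hwt a.
Proof.
rewrite /hwt (@spread_set (fun x _ => x) a a) // card_imset //.
by move=> [r k] [r' k'] [-> /g_inj ->].
Qed.

Lemma hdist_spread a a' : hdist (spread a) (spread a') = hdist a a'.
Proof.
rewrite /hdist (@spread_set (fun x y => x != y) a a') // card_imset //.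
by move=> [r k] [r' k'] [-> /g_inj ->].
Qed.

End Spread.

Section SupportEnum.
Variables (K : finType) (c0 : K) (N : nat) (b : {ffun K -> bool}).
Hypothesis hwt_b : hwt b = N.

Definition support_enum (k : 'I_N) : K := nth c0 (enum [set c | b c]) k.

Lemma size_enum_support : size (enum [set c | b c]) = N.
Proof. by rewrite -cardE. Qed.

Lemma support_enum_inj : injective support_enum.
Proof.
move=> k k' /eqP; rewrite nth_uniq ?size_enum_support ?enum_uniq //.
by move/eqP/val_inj.
Qed.

Lemma codom_support_enum c : (c \in codom support_enum) = b c.
Proof.
apply/codomP/idP => [[k ->]|bc].
  by rewrite -[b _]inE -mem_enum mem_nth ?size_enum_support.
have c_in : c \in enum [set c | b c] by rewrite mem_enum inE.
have k_lt : index c (enum [set c | b c]) < N by rewrite -size_enum_support index_mem.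
by exists (Ordinal k_lt); rewrite /support_enum nth_index.
Qed.

End SupportEnum.

Section Embedding.
Variables (m n : nat) (c0 : 'I_n).

Definition embed N (b : {ffun 'I_n -> bool}) (a : {ffun 'I_m * 'I_N -> bool}) :=
  spread (support_enum c0 b) a.

Variables (N W : nat) (b : {ffun 'I_n -> bool}) (a : {ffun 'I_m * 'I_N -> bool}).
Hypotheses (hwt_b : hwt b = N) (a_in : inJn W a).

Lemma hwt_embed : hwt (embed b a) = N * W.
Proof. by rewrite hwt_spread ?(hwt_inJn a_in) //; apply: support_enum_inj hwt_b. Qed.

Lemma embed_support r c : embed b a (r, c) -> b c.
Proof. by rewrite -(codom_support_enum c0 hwt_b); apply: spread_codom. Qed.

Lemma embed_col_le c : #|[set r | embed b a (r, c)]| <= W.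
Proof.
have [bc|nbc] := boolP (b c); last first.
  suff -> : [set r | embed b a (r, c)] = set0 by rewrite cards0.
  by apply/setP => r; rewrite !inE; apply: contraNF nbc; apply: embed_support.
move: bc; rewrite -(codom_support_enum c0 hwt_b) => /codomP[k ->].
move/forallP: a_in => /(_ k) /eqP <-; apply/eq_leq/eq_card => r.
by rewrite !inE spread_image //; apply: support_enum_inj hwt_b.
Qed.

End Embedding.

Lemma embed_dist_ge m n (c0 : 'I_n) N1 W1 N2 W2 T d
    (b1 b2 : {ffun 'I_n -> bool})
    (a1 : {ffun 'I_m * 'I_N1 -> bool}) (a2 : {ffun 'I_m * 'I_N2 -> bool}) :
  N1 * W1 = T -> N2 * W2 = T -> hwt b1 = N1 -> hwt b2 = N2 ->
  inJn W1 a1 -> inJn W2 a2 ->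
  #|[set c | b1 c && b2 c]| * W1 + d <= T ->
  2 * d <= hdist (embed c0 b1 a1) (embed c0 b2 a2).
Proof.
move=> NW1 NW2 hwt_b1 hwt_b2 a1_in a2_in meet_le.
have := hdist_hwt (embed c0 b1 a1) (embed c0 b2 a2).
rewrite (hwt_embed c0 hwt_b1 a1_in) (hwt_embed c0 hwt_b2 a2_in) NW1 NW2.
have := card_meet_le_cols (embed_support (c0 := c0) hwt_b1)
  (embed_support (c0 := c0) (a := a2) hwt_b2) (embed_col_le c0 hwt_b1 a1_in).
set meet := #|[set p | embed c0 b1 a1 p && embed c0 b2 a2 p]|.
lia.
Qed.

Section Levels.
Variables (m n l T d : nat) (c0 : 'I_n) (N W : nat -> nat).
Hypotheses (d_gt0 : 0 < d) (NW_T : forall i : 'I_l, N i * W i = T)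
  (W_gt0 : forall i : 'I_l, 0 < W i)
  (levels_gap : forall i j : 'I_l, i < j -> N j * W i + d <= T).
Variables (CB : 'I_l -> {set {ffun 'I_n -> bool}})
  (CA : forall i : 'I_l, {set {ffun 'I_m * 'I_(N i) -> bool}}).
Hypotheses (CB_wt : forall i, {in CB i, forall b, hwt b = N i})
  (CB_sep : forall i, separated d (CB i))
  (CA_in : forall i, {in CA i, forall a, inJn (W i) a})
  (CA_sep : forall i, separated d (CA i)).

Definition level i := [set embed c0 p.1 p.2 | p in setX (CB i) (CA i)].

Lemma embed_level_separated i :
  {in setX (CB i) (CA i) &, forall p q, p != q ->
    2 * d <= hdist (embed c0 p.1 p.2) (embed c0 q.1 q.2)}.
Proof.
move=> [b a] [b' a'] /setXP[bB aA] /setXP[b'B a'A] /= pq.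
have [eq_bb'|neq_bb'] := eqVneq b b'.
  rewrite -eq_bb' /embed hdist_spread; last exact: support_enum_inj (CB_wt bB).
  by apply: CA_sep => //; apply: contraNneq pq => ->; rewrite eq_bb'.
apply: embed_dist_ge (NW_T i) (NW_T i) (CB_wt bB) (CB_wt b'B) (CA_in aA)
  (CA_in a'A) _.
have := hdist_hwt b b'; rewrite (CB_wt bB) (CB_wt b'B).
set meet := #|[set c | b c && b' c]| => dist_b.
have meet_le : meet + d <= N i by have := CB_sep bB b'B neq_bb'; lia.
rewrite -(NW_T i) (leq_trans _ (leq_mul meet_le (leqnn (W i)))) // mulnDl leq_add2l.
exact: leq_pmulr (W_gt0 i).
Qed.

Lemma card_level i : #|level i| = #|CB i| * #|CA i|.
Proof. by rewrite (card_imset_separated d_gt0 (@embed_level_separated i)) cardsX. Qed.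

Lemma levels_far (i j : 'I_l) x y : i < j -> x \in level i -> y \in level j ->
  2 * d <= hdist x y.
Proof.
move=> lt_ij /imsetP[[b a] /setXP[bB aA] ->] /imsetP[[b' a'] /setXP[b'B a'A] ->].
apply: embed_dist_ge (NW_T i) (NW_T j) (CB_wt bB) (CB_wt b'B) (CA_in aA)
  (CA_in a'A) _.
apply: leq_trans (levels_gap lt_ij); rewrite leq_add2r leq_mul2r -(CB_wt b'B).
by rewrite subset_leq_card ?orbT //; apply/subsetP => c; rewrite !inE => /andP[].
Qed.

Lemma card_levels : #|\bigcup_i level i| = \sum_i #|CB i| * #|CA i|.
Proof.
rewrite -sum1_card partition_disjoint_bigcup => [|i j neq_ij].
  by apply: eq_bigr => i _; rewrite sum1_card card_level.
rewrite -setI_eq0; apply/set0Pn => -[x /setIP[xi xj]].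
have := hdistxx x; case: (ltngtP i j) => [lt_ij|lt_ji|/val_inj eq_ij].
- by have := levels_far lt_ij xi xj; lia.
- by have := levels_far lt_ji xj xi; lia.
- by rewrite eq_ij eqxx in neq_ij.
Qed.

Lemma levels_separated : separated d (\bigcup_i level i).
Proof.
move=> x y /bigcupP[i _ xi] /bigcupP[j _ yj] neq_xy.
case: (ltngtP i j) => [lt_ij|lt_ji|/val_inj eq_ij].
- exact: levels_far lt_ij xi yj.
- by rewrite hdistC; apply: levels_far lt_ji yj xi.
move: yj xi neq_xy; rewrite -eq_ij.
move=> /imsetP[q qi ->] /imsetP[p pi ->] neq_xy.
by apply: embed_level_separated => //; apply: contraNneq neq_xy => ->.
Qed.

Lemma sum_levels_le_Bcode : \sum_i #|CB i| * #|CA i| <= Bcode (m * n) T d.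
Proof.
rewrite -card_levels; apply: le_Bcode levels_separated.
  by rewrite card_prod !card_ord.
move=> _ /bigcupP[i _ /imsetP[[b a] /setXP[bB aA] ->]].
by rewrite (hwt_embed c0 (CB_wt bB) (CA_in aA)) NW_T.
Qed.

End Levels.

Lemma ler_nat_shrink (R : numFieldType) (x y d T : nat) : 0 < T ->
  (x%:R <= (1 - d%:R / T%:R) * y%:R :> R)%R = (x * T + d * y <= T * y).
Proof.
move=> T_gt0; have T_pos : (0 < T%:R :> R)%R by rewrite ltr0n.
rewrite -(ler_pM2r T_pos) -(ler_nat R) natrD !natrM -[in RHS]lerBrDr.
congr (_ <= _)%R; field.
by rewrite pnatr_eq0 -lt0n.
Qed.

Lemma decreasing_gap l T d (ns : nat -> nat) :
  (forall i, 1 <= i <= l.-1 -> ns i < ns i.-1) ->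
  (forall i, 1 <= i <= l.-1 -> ns i * T + d * ns i.-1 <= T * ns i.-1) ->
  forall i j, i < j < l -> ns j * T + d * ns i <= T * ns i.
Proof.
move=> decr step i j /andP[lt_ij lt_jl].
have noninc : {in [pred k | k < l] &, forall a b, a <= b -> ns b <= ns a}.
  apply: (@homo_leq_in _ _ _ (fun x y => y <= x)) => [//|a b c|a b _|a _].
  - by move=> ab ca; apply: leq_trans ca ab.
  - by move=> lt_bl k /andP[_ lt_kb]; rewrite !inE in lt_bl *; lia.
  - by rewrite !inE => lt_al; apply/ltnW/decr; lia.
have le_j : ns j <= ns i.+1 by apply: noninc; rewrite ?inE; lia.
apply: leq_trans (step i.+1 _); last by lia.
by rewrite leq_add2r leq_mul2r le_j orbT.
Qed.

Theorem proposition7 (m n w d l : nat) (ns : nat -> nat) :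
  0 < m -> 0 < n -> 0 < w -> 0 < d -> 0 < l -> w <= m ->
  ns 0 = n ->
  (forall i, i < l -> 0 < ns i) ->
  (forall i, 1 <= i <= l.-1 -> ns i < ns i.-1) ->
  (forall i, 1 <= i <= l.-1 ->
     [/\ ns i %| n * w,
         ((n * w)%:R / m%:R <= (ns i)%:R :> rat)%R &
         ((ns i)%:R <= (1 - d%:R / (n * w)%:R) * (ns i.-1)%:R :> rat)%R]) ->
  \sum_(i < l) Bcode n (ns i) d * Acode m (ns i) (n * w %/ ns i) d
    <= Bcode (m * n) (n * w) d.
Proof.
(* w <= m and nw/m <= n_i (i.e. w_i <= m) only keep the A-terms nonzero. *)
move=> _ n_gt0 w_gt0 d_gt0 _ _ ns0 ns_gt0 ns_decr ns_cond.
set T := n * w; have T_gt0 : 0 < T by rewrite muln_gt0 n_gt0.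
have ns_step i : 1 <= i <= l.-1 -> ns i * T + d * ns i.-1 <= T * ns i.-1.
  by case/ns_cond => _ _; rewrite ler_nat_shrink.
have NW_T (i : 'I_l) : ns i * (T %/ ns i) = T.
  rewrite mulnC divnK //; case: i => -[|i] /= lt_il; first by rewrite ns0 dvdn_mulr.
  by case: (ns_cond i.+1) => //; lia.
have W_gt0 (i : 'I_l) : 0 < T %/ ns i.
  by have := NW_T i; case: (T %/ ns i) => //; rewrite muln0; lia.
have gap (i j : 'I_l) : i < j -> ns j * (T %/ ns i) + d <= T.
  move=> lt_ij; rewrite -(leq_pmul2l (ns_gt0 i (ltn_ord i))) mulnDr mulnCA NW_T.
  rewrite [ns i * d]mulnC [ns i * T]mulnC.
  by rewrite (decreasing_gap ns_decr ns_step) // lt_ij ltn_ord.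
have [CB CB_opt] := fin_all_exists (fun i : 'I_l => maxcode_witness (@inJ n (ns i)) d).
have [CA CA_opt] :=
  fin_all_exists (fun i : 'I_l => maxcode_witness (@inJn m (ns i) (T %/ ns i)) d).
rewrite (eq_bigr (fun i => #|CB i| * #|CA i|)) => [|i _]; last first.
  by rewrite /Bcode /Acode; case: (CB_opt i) => <- _ _; case: (CA_opt i) => <- _ _.
apply: (sum_levels_le_Bcode (W := fun i => T %/ ns i) (Ordinal n_gt0) d_gt0 NW_T
  W_gt0 gap).
- by move=> i b bB; case: (CB_opt i) => _ /(_ b bB) /eqP.
- by move=> i; case: (CB_opt i).
- by move=> i; case: (CA_opt i) => _ CA_in _.
- by move=> i; case: (CA_opt i).
Qed.
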